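(* Let $G$ be a character-free complex linear algebraic group. Let $D,D'$ be infinite discrete subsets of $G$ such that the symmetric difference $(D\setminus D')\cup(D'\setminus D)$ is finite. Then $D$ is tame if and only if $D'$ is tame.
   Context: A complex linear algebraic group $G$ is character-free if every morphism of algebraic groups $G\to\mathbb{C}^*$ is trivial. An exhaustion function on $G$ is a continuous $\rho:G\to\mathbb{R}^+$ with all sublevel sets compact. An infinite discrete subset $D$ of a complex manifold $X$ is called tame if for every exhaustion function $\rho$ on $X$ and every map $\zeta:D\to\mathbb{R}^+$ there exists a biholomorphic self-map $\phi$ of $X$ with $\rho(\phi(x))\ge\zeta(x)$ for all $x\in D$. *)

From HB Require Import structures.
From mathcomp Require Import all_boot all_order all_algebra.
From mathcomp Require Import all_classical all_reals all_analysis.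
From mathcomp Require Import complex.
Import Order.TTheory GRing.Theory Num.Theory.
Import numFieldNormedType.Exports.
Local Open Scope ring_scope.
Local Open Scope classical_set_scope.

Set Implicit Arguments. Unset Strict Implicit. Unset Printing Implicit Defensive.

(* The complex numbers are R[i] for a realType R; complex n x n matrices,
   viewed as the normed C-vector space C^(n*n). *)
Definition Mx (R : realType) (n : nat) : normedModType R[i] := 'M[R[i]]_n.

Inductive is_polyfun (R : realType) (n : nat) : (Mx R n -> R[i]) -> Prop :=
| pf_cst (c : R[i]) : is_polyfun (fun _ => c)
| pf_coord (i j : 'I_n) : is_polyfun (fun A : Mx R n => (A : 'M[R[i]]_n) i j)
| pf_add f g : is_polyfun f -> is_polyfun g -> is_polyfun (fun A => f A + g A)
| pf_mul f g : is_polyfun f -> is_polyfun g -> is_polyfun (fun A => f A * g A).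

(* A complex linear algebraic group, realised as a Zariski-closed subgroup
   of GL_n(C) (every linear algebraic group is isomorphic to one). *)
Definition lin_alg_group (R : realType) (n : nat) (G : set (Mx R n)) : Prop :=
  (exists S : set (Mx R n -> R[i]),
      (forall p, S p -> is_polyfun p) /\
      G = [set A : Mx R n | \det (A : 'M[R[i]]_n) != 0 /\ forall p, S p -> p A = 0])
  /\ G (1%:M : 'M[R[i]]_n)
  /\ (forall A B : Mx R n, G A -> G B -> G ((A : 'M[R[i]]_n) *m B))
  /\ (forall A : Mx R n, G A -> G (invmx (A : 'M[R[i]]_n))).

(* Regular functions on G: restrictions of elements of C[x_ij, 1/det]. *)
Definition regular_on (R : realType) (n : nat) (G : set (Mx R n))
    (f : Mx R n -> R[i]) : Prop :=
  exists (p : Mx R n -> R[i]) (k : nat), is_polyfun p /\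
    forall A : Mx R n, G A -> f A = p A / (\det (A : 'M[R[i]]_n)) ^+ k.

Definition character (R : realType) (n : nat) (G : set (Mx R n))
    (chi : Mx R n -> R[i]) : Prop :=
  regular_on G chi /\ (forall A, G A -> chi A != 0) /\
  (forall A B : Mx R n, G A -> G B -> chi ((A : 'M[R[i]]_n) *m B) = chi A * chi B).

Definition character_free (R : realType) (n : nat) (G : set (Mx R n)) : Prop :=
  forall chi, character G chi -> forall A, G A -> chi A = 1.

Definition exhaustion (R : realType) (n : nat) (G : set (Mx R n))
    (rho : Mx R n -> R) : Prop :=
  {within G, continuous rho} /\ (forall x, G x -> 0 < rho x) /\
  forall c : R, compact (G `&` [set x | rho x <= c]).

(* Holomorphic map G -> Mx (G is a closed complex submanifold of the open set
   GL_n(C) of C^(n*n)): locally the restriction of a holomorphic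
   (= C-differentiable) map defined on an open subset of C^(n*n). *)
Definition holomorphic_on (R : realType) (n : nat) (G : set (Mx R n))
    (phi : Mx R n -> Mx R n) : Prop :=
  forall x, G x -> exists (U : set (Mx R n)) (F : Mx R n -> Mx R n),
    [/\ open U, U x, (forall y, U y -> differentiable F y) &
        (forall y, U y -> G y -> F y = phi y)].

Definition biholomorphic_self (R : realType) (n : nat) (G : set (Mx R n))
    (phi : Mx R n -> Mx R n) : Prop :=
  (forall x, G x -> G (phi x)) /\ holomorphic_on G phi /\
  exists psi : Mx R n -> Mx R n,
    [/\ forall x, G x -> G (psi x), holomorphic_on G psi,
        forall x, G x -> psi (phi x) = x & forall x, G x -> phi (psi x) = x].

(* Discrete subset of G (closed discrete: no accumulation point in G). *)
Definition discrete_in (R : realType) (n : nat) (G D : set (Mx R n)) : Prop :=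
  D `<=` G /\ forall x, G x -> exists U, nbhs x U /\ U `&` D `<=` [set x].

Definition tame (R : realType) (n : nat) (G D : set (Mx R n)) : Prop :=
  ~ finite_set D /\ discrete_in G D /\
  forall (rho : Mx R n -> R) (zeta : Mx R n -> R),
    exhaustion G rho -> (forall x, D x -> 0 < zeta x) ->
    exists phi, biholomorphic_self G phi /\ forall x, D x -> zeta x <= rho (phi x).

From HB Require Import structures.
From mathcomp Require Import all_boot all_order all_algebra.
From mathcomp Require Import all_classical all_reals all_analysis.
From mathcomp Require Import complex finmap.
Import Order.TTheory GRing.Theory Num.Theory.
Import numFieldNormedType.Exports.
Local Open Scope ring_scope.
Local Open Scope classical_set_scope.
Set Implicit Arguments. Unset Strict Implicit. Unset Printing Implicit Defensive.

(* It suffices to add one point p to a tame set E.  Given rho and zeta, pick g in G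
   with rho (g q) > zeta p whenever rho q <= zeta p: tame sets reach arbitrarily
   high values of rho, whereas rho is bounded on the compact set K K^-1, K being
   the sublevel set {rho <= zeta p}.  Tameness of E for the exhaustion
   min(rho, rho \o L_g) yields phi such that phi or L_g \o phi also works at p. *)

Section MatrixContinuity.
Variables (K : numFieldType) (T : topologicalType).

Lemma continuous_mx_entries m p (f : T -> 'M[K]_(m, p)) x :
  (forall i j, {for x, continuous (fun y => f y i j)}) -> {for x, continuous f}.
Proof.
move=> f_cont A [P nP sPA].
have : \forall y \near x, forall i j, P i j (f y i j).
  by do 2![apply: filter_forall => ?]; exact: f_cont.
by apply: filterS => y Py; exact: sPA.
Qed.

Lemma continuous_entry m p (f : T -> 'M[K]_(m, p)) x i j :
  {for x, continuous f} -> {for x, continuous (fun y => f y i j)}.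
Proof.
by move=> f_cont; exact: continuous_comp f_cont (@coord_continuous K m p i j _).
Qed.

Lemma continuous_sum (I : Type) (r : seq I) (P : pred I) (F : I -> T -> K) x :
  (forall i, {for x, continuous (F i)}) ->
  {for x, continuous (fun y => \sum_(i <- r | P i) F i y)}.
Proof.
by move=> F_cont; apply: cvg_big => // *; [exact: add_continuous | exact: F_cont].
Qed.

Lemma continuous_prod (I : Type) (r : seq I) (P : pred I) (F : I -> T -> K) x :
  (forall i, {for x, continuous (F i)}) ->
  {for x, continuous (fun y => \prod_(i <- r | P i) F i y)}.
Proof.
by move=> F_cont; apply: cvg_big => // *; [exact: mul_continuous | exact: F_cont].
Qed.

Lemma continuous_mulmx m p q (f : T -> 'M[K]_(m, p)) (g : T -> 'M[K]_(p, q)) x :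
  {for x, continuous f} -> {for x, continuous g} ->
  {for x, continuous (fun y => f y *m g y)}.
Proof.
move=> f_cont g_cont; apply: continuous_mx_entries => i j.
have -> : (fun y => (f y *m g y) i j) = (fun y => \sum_k f y i k * g y k j).
  by apply/funext => y; rewrite mxE.
by apply: continuous_sum => k; apply: continuousM; exact: continuous_entry.
Qed.

Lemma continuous_det m (f : T -> 'M[K]_m) x :
  {for x, continuous f} -> {for x, continuous (fun y => \det (f y))}.
Proof.
move=> f_cont; apply: continuous_sum => s; apply: continuousM.
  exact: cst_continuous.
by apply: continuous_prod => i; exact: continuous_entry.
Qed.

Lemma continuous_adj m (f : T -> 'M[K]_m) x :
  {for x, continuous f} -> {for x, continuous (fun y => \adj (f y))}.
Proof.
move=> f_cont; apply: continuous_mx_entries => k j.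
have -> : (fun y => \adj (f y) k j) =
          (fun y => (-1) ^+ (j + k) * \det (row' j (col' k (f y)))).
  by apply/funext => y; rewrite mxE.
apply: continuousM; first exact: cst_continuous.
apply: continuous_det; apply: continuous_mx_entries => a b.
have -> : (fun y => row' j (col' k (f y)) a b) = (fun y => f y (lift j a) (lift k b)).
  by apply/funext => y; rewrite !mxE.
exact: continuous_entry.
Qed.

Lemma continuous_invmx m (f : T -> 'M[K]_m) x :
  f x \in unitmx -> {for x, continuous f} ->
  {for x, continuous (fun y => invmx (f y))}.
Proof.
move=> fx_unit f_cont; have det_cont := continuous_det f_cont.
have detx_neq0 : \det (f x) != 0 by rewrite -unitfE -unitmxE.
pose g y := (\det (f y))^-1 *: \adj (f y).
have g_cont : {for x, continuous g}.
  apply: continuous_mx_entries => k j.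
  have -> : (fun y => g y k j) = (fun y => (\det (f y))^-1 * \adj (f y) k j).
    by apply/funext => y; rewrite mxE.
  apply: continuousM; first exact: continuousV.
  exact/continuous_entry/continuous_adj.
have inv_near : \forall y \near x, g y = invmx (f y).
  near=> y; rewrite /g /invmx unitmxE unitfE ifT //.
  by near: y; exact: cvgr_neq0 det_cont detx_neq0.
apply: cvg_trans (near_eq_cvg inv_near) _.
by rewrite /invmx fx_unit; exact: g_cont.
Unshelve. all: by end_near. Qed.

End MatrixContinuity.

Section LeftTranslation.
Variables (R : realType) (n : nat).

Definition lmul (g x : Mx R n) : Mx R n := (g : 'M[R[i]]_n) *m (x : 'M[R[i]]_n).

Definition rdivmx (z : Mx R n * Mx R n) : Mx R n :=
  lmul z.1 (invmx (z.2 : 'M[R[i]]_n)).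

Lemma continuous_lmul g : continuous (lmul g).
Proof. by move=> x; apply: continuous_mulmx; [exact: cst_continuous | exact: cvg_id]. Qed.

Lemma differentiable_lmul g x : differentiable (lmul g) x.
Proof.
have := @linear_differentiable _ (Mx R n) (Mx R n) (mulmx g) x.
by apply; exact: continuous_lmul.
Qed.

End LeftTranslation.
Arguments rdivmx {R n}.

Lemma continuous_within_comp (T U V : topologicalType) (A : set T) (B : set U)
    (f : T -> U) (h : U -> V) :
  continuous f -> f @` A `<=` B -> {within B, continuous h} ->
  {within A, continuous (h \o f)}.
Proof.
move=> f_cont fAB /subspace_continuousP h_cont; apply/subspace_continuousP => x Ax.
apply: cvg_comp (h_cont _ (fAB _ (imageP _ Ax))) => P /= /f_cont fP.
rewrite /within; apply: (@filterS _ (nbhs x) _ _ _ _ fP) => y Py Ay.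
exact/Py/fAB/imageP.
Qed.

Lemma continuous_compact_ubounded (R : realType) (T : topologicalType)
    (f : T -> R) K :
  {within K, continuous f} -> compact K -> exists M, forall t, K t -> f t <= M.
Proof.
move=> f_cont K_compact.
have [M [_ M_bound]] := compact_bounded (continuous_compact f_cont K_compact).
exists (`|M| + 1) => t Kt.
have := M_bound (`|M| + 1) (ltr_pwDr ltr01 (ler_norm M)) (f t) (imageP _ Kt).
exact/le_trans/ler_norm.
Qed.

Section SubgroupOfGL.
Variables (R : realType) (n : nat) (G : set (Mx R n)).

Lemma holomorphic_lmul_comp g phi :
  holomorphic_on G phi -> holomorphic_on G (lmul g \o phi).
Proof.
move=> phi_hol x Gx; have [U [F [oU Ux F_diff F_phi]]] := phi_hol x Gx.
exists U, (lmul g \o F); split => // [y Uy|y Uy Gy]; last by rewrite /= F_phi.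
exact: differentiable_comp (F_diff y Uy) (differentiable_lmul g (F y)).
Qed.

Lemma holomorphic_comp_lmul h psi :
  lmul h @` G `<=` G -> holomorphic_on G psi -> holomorphic_on G (psi \o lmul h).
Proof.
move=> hG psi_hol x Gx.
have [U [F [oU Ux F_diff F_psi]]] := psi_hol _ (hG _ (imageP _ Gx)).
exists (lmul h @^-1` U), (F \o lmul h); split => //.
- by apply: open_comp => // y _; exact: continuous_lmul.
- by move=> y Uy; exact: differentiable_comp (differentiable_lmul h y) (F_diff _ Uy).
- by move=> y Uy Gy; rewrite /= F_psi //; exact/hG/imageP.
Qed.

Hypothesis G_unitmx : forall A : Mx R n, G A -> (A : 'M[R[i]]_n) \in unitmx.
Hypothesis G_mulmx : forall A B : Mx R n, G A -> G B -> G (lmul A B).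
Hypothesis G_invmx : forall A : Mx R n, G A -> G (invmx (A : 'M[R[i]]_n)).

Lemma lmul_sub g : G g -> lmul g @` G `<=` G.
Proof. by move=> Gg _ [x Gx <-]; exact: G_mulmx. Qed.

Lemma lmulK g : G g -> cancel (lmul g) (lmul (invmx (g : 'M[R[i]]_n))).
Proof. by move=> Gg x; rewrite /lmul mulKmx ?G_unitmx. Qed.

Lemma lmulKV g : G g -> cancel (lmul (invmx (g : 'M[R[i]]_n))) (lmul g).
Proof. by move=> Gg x; rewrite /lmul mulKVmx ?G_unitmx. Qed.

Lemma biholomorphic_lmul_comp g phi :
  G g -> biholomorphic_self G phi -> biholomorphic_self G (lmul g \o phi).
Proof.
move=> Gg [phiG [phi_hol [psi [psiG psi_hol psiK phiK]]]].
have Gg' := G_invmx Gg.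
split; [|split]; first by move=> x /phiG; exact: G_mulmx.
  exact: holomorphic_lmul_comp.
exists (psi \o lmul (invmx (g : 'M[R[i]]_n))); split.
- by move=> x Gx; apply/psiG/G_mulmx.
- exact: holomorphic_comp_lmul (lmul_sub Gg') psi_hol.
- by move=> x Gx /=; rewrite lmulK // psiK.
- by move=> x Gx /=; rewrite phiK ?lmulKV //; exact: G_mulmx.
Qed.

Lemma exhaustion_min_lmul rho g : G g -> exhaustion G rho ->
  exhaustion G (fun x => Order.min (rho x) (rho (lmul g x))).
Proof.
move=> Gg [rho_cont [rho_gt0 rho_compact]]; split; [|split].
- move=> x; apply: continuous_min; first exact: rho_cont.
  exact: (continuous_within_comp (@continuous_lmul R n g) (lmul_sub Gg) rho_cont).
- by move=> x Gx; rewrite lt_min !rho_gt0 //; exact: G_mulmx.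
move=> c; set K := G `&` [set x | rho x <= c].
have -> : G `&` [set x | Order.min (rho x) (rho (lmul g x)) <= c] =
          K `|` lmul (invmx (g : 'M[R[i]]_n)) @` K.
  apply/seteqP; split => x /=.
  - move=> [Gx]; rewrite ge_min => /orP[rx|rgx]; first by left.
    by right; exists (lmul g x); [split=> //; exact: G_mulmx | exact: lmulK].
  - move=> [[Gx rx]|[y [Gy ry] <-]]; first by split=> //; rewrite ge_min rx.
    split; first exact: G_mulmx (G_invmx Gg) Gy.
    by rewrite ge_min lmulKV // (ry : rho y <= c) orbT.
apply: compactU; first exact: rho_compact.
apply: continuous_compact (rho_compact c).
exact/continuous_subspaceT/continuous_lmul.
Qed.

Lemma compact_rdivmx K : K `<=` G -> compact K -> compact (rdivmx @` (K `*` K)).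
Proof.
move=> KG K_compact; apply: continuous_compact (compact_setX K_compact K_compact).
apply: continuous_in_subspaceT => z /set_mem [_ /KG/G_unitmx z2_unit].
apply: continuous_mulmx; first exact: cvg_fst.
by apply: continuous_invmx z2_unit _; exact: cvg_snd.
Qed.

Lemma tame_exhaustion_unbounded E rho M : tame G E -> exhaustion G rho ->
  exists g, G g /\ M < rho g.
Proof.
move=> [E_infinite [[EG _] E_tame]] rho_exh.
have /set0P [e Ee] : E != set0 by apply/eqP => E0; apply: E_infinite; rewrite E0.
have [phi [[phiG _] rho_phi]] := E_tame rho (fun=> `|M| + 1) rho_exh
  (fun _ _ => ltr_wpDl (normr_ge0 M) ltr01).
exists (phi e); split; first exact/phiG/EG.
exact: lt_le_trans (ltr_pwDr ltr01 (ler_norm M)) (rho_phi e Ee).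
Qed.

Lemma exists_lmul_above_sublevel E rho c : tame G E -> exhaustion G rho ->
  exists g, G g /\ forall q, G q -> rho q <= c -> c < rho (lmul g q).
Proof.
move=> E_tame rho_exh; set K := G `&` [set x | rho x <= c].
have KG : K `<=` G by move=> ? [].
have KKVG : rdivmx @` (K `*` K) `<=` G.
  by move=> _ [z [[Gs _] [Gq _]] <-]; exact: G_mulmx Gs (G_invmx Gq).
have [M KKV_bound] := continuous_compact_ubounded
  (continuous_subspaceW KKVG rho_exh.1) (compact_rdivmx KG (rho_exh.2.2 c)).
have [g [Gg M_lt_rhog]] := tame_exhaustion_unbounded M E_tame rho_exh.
exists g; split => // q Gq rhoq; rewrite ltNge; apply/negP => rhogq.
suff : rho g <= M by rewrite leNgt M_lt_rhog.
apply: KKV_bound; exists (lmul g q, q); first by split; split => //; exact: G_mulmx.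
by rewrite /rdivmx /lmul mulmxK ?G_unitmx.
Qed.

Lemma discrete_in_sub A B : A `<=` B -> discrete_in G B -> discrete_in G A.
Proof.
move=> AB [BG B_discrete]; split => [x /AB /BG //|x Gx].
have [U [Ux UB]] := B_discrete x Gx; exists U; split => // y [Uy Ay].
by apply: UB; split => //; exact: AB.
Qed.

Lemma tame_sub A B : A `<=` B -> ~ finite_set A -> tame G B -> tame G A.
Proof.
move=> AB A_infinite [_ [B_discrete B_tame]].
split => //; split => [|rho zeta rho_exh zeta_gt0].
  exact: discrete_in_sub B_discrete.
have [phi [phi_bihol rho_phi]] := B_tame rho (fun x => Order.max (zeta x) 1) rho_exh
  (fun x _ => ltac:(by rewrite lt_max ltr01 orbT)).
exists phi; split => // x Ax; apply: le_trans (rho_phi x (AB x Ax)).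
by rewrite le_max lexx.
Qed.

Lemma tame_setU1 E p : tame G E -> discrete_in G (p |` E) -> tame G (p |` E).
Proof.
move=> E_tame pE_discrete; have [E_infinite [_ E_tame']] := E_tame.
split; first by rewrite finite_setU => -[].
split => // rho zeta rho_exh zeta_gt0.
have [g [Gg g_above]] := exists_lmul_above_sublevel (zeta p) E_tame rho_exh.
have [phi [phi_bihol rho_phi]] := E_tame' _ zeta (exhaustion_min_lmul Gg rho_exh)
  (fun x Ex => zeta_gt0 x (or_intror Ex)).
have Gphip : G (phi p) by apply: phi_bihol.1; apply: pE_discrete.1; left.
have [zeta_le|rho_lt] := leP (zeta p) (rho (phi p)).
- exists phi; split => // x [->|Ex] //.
  by apply: le_trans (rho_phi x Ex) _; rewrite ge_min lexx.
- exists (lmul g \o phi); split; first exact: biholomorphic_lmul_comp.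
  move=> x [->|Ex]; first exact/ltW/g_above/ltW.
  by apply: le_trans (rho_phi x Ex) _; rewrite ge_min lexx orbT.
Qed.

Lemma tame_setU_finite E F : tame G E -> finite_set F ->
  discrete_in G (E `|` F) -> tame G (E `|` F).
Proof.
move=> E_tame /finite_fsetP [S ->]; elim/fset1U_rect: S => [|x S _ IH].
  by rewrite set_fset0 setU0.
rewrite set_fsetU1 setUCA => xES_discrete; apply: tame_setU1 => //.
by apply: IH; apply: discrete_in_sub xES_discrete => y; right.
Qed.

Lemma tame_finite_symdiff D D' : ~ finite_set D' -> discrete_in G D' ->
  finite_set ((D `\` D') `|` (D' `\` D)) -> tame G D -> tame G D'.
Proof.
move=> D'_infinite D'_discrete symdiff_finite D_tame.
have D'E : D' = (D `&` D') `|` (D' `\` D).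
  apply/seteqP; split => [x D'x|x [[]|[]]//].
  by have [Dx|Dx] := pselect (D x); [left|right].
have D'D_finite : finite_set (D' `\` D).
  by apply: sub_finite_set symdiff_finite => x; right.
have DD'_infinite : ~ finite_set (D `&` D').
  by move=> DD'_finite; apply: D'_infinite; rewrite D'E finite_setU.
rewrite D'E; apply: tame_setU_finite => //; last by rewrite -D'E.
by apply: tame_sub D_tame => // x [].
Qed.

End SubgroupOfGL.

Lemma lin_alg_group_subgroup R n (G : set (Mx R n)) : lin_alg_group G ->
  [/\ forall A : Mx R n, G A -> (A : 'M[R[i]]_n) \in unitmx,
      forall A B : Mx R n, G A -> G B -> G (lmul A B)
    & forall A : Mx R n, G A -> G (invmx (A : 'M[R[i]]_n))].
Proof.
move=> [[S [_ ->]] [_ [G_mulmx G_invmx]]]; split => // A [det_neq0 _].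
by rewrite unitmxE unitfE.
Qed.

Theorem corollary2p4 (R : realType) (n : nat) (G : set (Mx R n))
    (D D' : set (Mx R n)) :
  lin_alg_group G -> character_free G ->
  ~ finite_set D -> discrete_in G D ->
  ~ finite_set D' -> discrete_in G D' ->
  finite_set ((D `\` D') `|` (D' `\` D)) ->
  (tame G D <-> tame G D').
Proof.
move=> /lin_alg_group_subgroup [G_unitmx G_mulmx G_invmx] _ D_infinite D_discrete
  D'_infinite D'_discrete symdiff_finite.
by split; apply: tame_finite_symdiff => //; rewrite setUC.
Qed.
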